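(* There are uncountably many distinct locating-paired-dominating sets of the king grid that have density $2/9$.
   Context: The king grid is the infinite graph with vertex set $\mathbb{Z}\times\mathbb{Z}$ in which two distinct vertices are adjacent iff their Euclidean distance is at most $\sqrt2$. $N(v)$ is the open neighborhood of $v$ and $N[v]=N(v)\cup\{v\}$. A set $S\subset V$ is a locating-paired-dominating set (LPDS) if (i) every vertex $v$ satisfies $N[v]\cap S\neq\emptyset$, (ii) the induced subgraph $G[S]$ has a perfect matching, and (iii) for any two distinct vertices $u,v\in V\setminus S$, $N(u)\cap S\neq N(v)\cap S$. For $k\ge 0$ and $u\in V$, $N^k[u]=\{x: d(u,x)\le k\}$ with $d$ the graph distance. The density of $A\subset V$ is $D(A)=\limsup_{k\to\infty}\frac{|A\cap N^k[u]|}{|N^k[u]|}$ (independent of $u$). *)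

From Stdlib Require Import ZArith Reals List.
From Coquelicot Require Import Coquelicot.
Open Scope Z_scope.

Definition V := (Z * Z)%type.

Definition vset := V -> bool.

(* King grid adjacency: distinct vertices at Euclidean distance <= sqrt 2,
   i.e. |dx| <= 1, |dy| <= 1, (dx,dy) <> (0,0). *)
Definition adj (u v : V) : Prop :=
  u <> v /\ Z.abs (fst u - fst v) <= 1 /\ Z.abs (snd u - snd v) <= 1.

Definition inN_closed (v x : V) : Prop := x = v \/ adj v x.

Definition is_LPDS (S : vset) : Prop :=
  (forall v : V, exists x : V, inN_closed v x /\ S x = true) /\
  (* (ii) G[S] has a perfect matching: an involution M on S along edges *)
  (exists M : V -> V, forall x : V, S x = true ->
       S (M x) = true /\ adj x (M x) /\ M (M x) = x) /\
  (forall u v : V, S u = false -> S v = false -> u <> v ->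
       exists x : V, ~ ((adj u x /\ S x = true) <-> (adj v x /\ S x = true))).

(* Graph distance in the king grid is the Chebyshev distance, so
   N^k[u] = {x : |x1-u1| <= k, |x2-u2| <= k}, enumerated here. *)
Definition coord_range (c : Z) (k : nat) : list Z :=
  map (fun i => c - Z.of_nat k + Z.of_nat i) (seq 0 (2 * k + 1)).

Definition ball (u : V) (k : nat) : list V :=
  list_prod (coord_range (fst u) k) (coord_range (snd u) k).

Definition ratio (A : vset) (u : V) (k : nat) : R :=
  (INR (length (filter A (ball u k))) / INR (length (ball u k)))%R.

Definition density_at (A : vset) (u : V) : Rbar :=
  LimSup_seq (ratio A u).

(* The set [base] of vertices (x, y) with x - 2y = 0 or 3 (mod 9) is an LPDS of density 2/9:
   it is perfectly matched along the direction (1, -1), and since it is invariant under the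
   translations preserving x - 2y mod 9, domination and location reduce to finite checks on the
   nine residues (two non-members at Chebyshev distance > 2 are separated by any dominating set).
   For b : nat -> bool, adding the adjacent pairs (9n+1, 0), (9n+2, 0) for which b n holds keeps
   an LPDS (separation survives enlarging the set and the new pairs match each other) and keeps
   the density, as each column gains at most one vertex.  Reading b n back at (9n+1, 0), Cantor's
   diagonal argument shows that no sequence lists all these sets. *)

From Pilot Require Import Defs.
From Stdlib Require Import ZArith Reals List Lia Lra Bool.
From Coquelicot Require Import Coquelicot.

Open Scope Z_scope.

Ltac lia_divmod := Z.div_mod_to_equations; lia.

Lemma cantor_diagonal {T : Type} (F : (nat -> bool) -> T) (read : T -> nat -> bool) :
  (forall b n, read (F b) n = b n) -> forall g : nat -> T, exists b, forall n, g n <> F b.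
Proof.
  intros readF g. exists (fun n => negb (read (g n) n)). intros n E.
  pose proof (readF (fun n => negb (read (g n) n)) n) as H. rewrite <- E in H.
  destruct (read (g n) n); discriminate.
Qed.

Definition dominating (S : vset) : Prop :=
  forall v : V, exists x : V, inN_closed v x /\ S x = true.

Definition perfectly_matched (S : vset) : Prop :=
  exists M : V -> V, forall x : V, S x = true ->
    S (M x) = true /\ adj x (M x) /\ M (M x) = x.

Definition separates (S : vset) (u v : V) : Prop :=
  exists x : V, ~ ((adj u x /\ S x = true) <-> (adj v x /\ S x = true)).

Definition locating (S : vset) : Prop :=
  forall u v : V, S u = false -> S v = false -> u <> v -> separates S u v.

Definition setU (S T : vset) : vset := fun p => S p || T p.

Lemma separates_mono (S S' : vset) u v :
  (forall x, S x = true -> S' x = true) -> separates S u v -> separates S' u v.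
Proof.
  intros sub [x Hx]. exists x. intros iff'. apply Hx.
  split; intros [Ax Sx]; (split; [|exact Sx]); apply iff'; auto.
Qed.

Lemma is_LPDS_setU (S T : vset) :
  is_LPDS S -> perfectly_matched T -> (forall p, S p = true -> T p = false) ->
  is_LPDS (setU S T).
Proof.
  intros [domS [[MS HS] locS]] [MT HT] disj. unfold setU. split; [|split].
  - intros v. destruct (domS v) as [x [Nx Sx]]. exists x. rewrite Sx. auto.
  - exists (fun x => if S x then MS x else MT x). intros x Hx.
    destruct (S x) eqn:Sx.
    + destruct (HS x Sx) as [SM [Ax MM]]. rewrite SM, MM. auto.
    + destruct (HT x Hx) as [TM [Ax MM]].
      assert (SM : S (MT x) = false).
      { destruct (S (MT x)) eqn:E; [now rewrite (disj _ E) in TM | reflexivity]. }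
      rewrite SM, MM, TM, orb_true_r. auto.
  - intros u v Hu Hv Huv. apply orb_false_iff in Hu as [Hu _], Hv as [Hv _].
    apply (separates_mono S); [intros x Sx; now rewrite Sx | exact (locS u v Hu Hv Huv)].
Qed.

Lemma dominating_separates_far (S : vset) u v :
  dominating S -> S u = false ->
  2 < Z.abs (fst u - fst v) \/ 2 < Z.abs (snd u - snd v) -> separates S u v.
Proof.
  intros domS Su far. destruct (domS u) as [x [[-> | Aux] Sx]]; [congruence|].
  exists x. intros iff'. destruct (proj1 iff' (conj Aux Sx)) as [[_ Avx] _].
  destruct Aux as [_ Aux]. lia.
Qed.

Definition vadd (p e : V) : V := (fst p + fst e, snd p + snd e).
Definition vopp (e : V) : V := (- fst e, - snd e).

Lemma vadd_0 p : vadd p (0, 0) = p.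
Proof. destruct p; unfold vadd; simpl; f_equal; ring. Qed.

Lemma vaddK p e : vadd (vadd p e) (vopp e) = p.
Proof. destruct p, e; unfold vadd; simpl; f_equal; ring. Qed.

Lemma vaddNK p e : vadd (vadd p (vopp e)) e = p.
Proof. destruct p, e; unfold vadd; simpl; f_equal; ring. Qed.

Lemma adj_vadd p e :
  e <> (0, 0) -> Z.abs (fst e) <= 1 -> Z.abs (snd e) <= 1 -> adj p (vadd p e).
Proof.
  destruct p as [x y], e as [a b]; unfold adj, vadd; simpl. intros Ne Ha Hb.
  split; [|lia]. intros E. injection E as Ex Ey. apply Ne. f_equal; lia.
Qed.

Lemma inN_closed_vadd p e :
  Z.abs (fst e) <= 1 -> Z.abs (snd e) <= 1 -> inN_closed p (vadd p e).
Proof.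
  intros Ha Hb. destruct e as [a b]. unfold inN_closed.
  destruct (Z.eq_dec a 0) as [-> | Na]; [destruct (Z.eq_dec b 0) as [-> | Nb]|].
  - left. apply vadd_0.
  - right. apply adj_vadd; auto. intros E; injection E; lia.
  - right. apply adj_vadd; auto. intros E; injection E; lia.
Qed.

Lemma perfectly_matched_by_translation (S L : vset) (t : V) :
  t <> (0, 0) -> Z.abs (fst t) <= 1 -> Z.abs (snd t) <= 1 ->
  (forall p, S p = true -> L p = true -> S (vadd p t) = true /\ L (vadd p t) = false) ->
  (forall p, S p = true -> L p = false ->
     S (vadd p (vopp t)) = true /\ L (vadd p (vopp t)) = true) ->
  perfectly_matched S.
Proof.
  intros Nt Ht1 Ht2 forth back.
  exists (fun p => if L p then vadd p t else vadd p (vopp t)). intros p Sp.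
  destruct (L p) eqn:Lp.
  - destruct (forth p Sp Lp) as [S' L']. rewrite L', vaddK. auto using adj_vadd.
  - destruct (back p Sp Lp) as [S' L']. rewrite L', vaddNK.
    split; [exact S' | split; [|reflexivity]].
    destruct t as [a c]. apply adj_vadd; simpl in *; [|lia..].
    intros E. injection E as Ea Ec. apply Nt. f_equal; lia.
Qed.

(** * The periodic set *)

Definition adjb (p q : V) : bool :=
  let dx := fst q - fst p in
  let dy := snd q - snd p in
  negb ((dx =? 0) && (dy =? 0)) && (Z.abs dx <=? 1) && (Z.abs dy <=? 1).

Lemma adjb_spec p q : adjb p q = true <-> adj p q.
Proof.
  destruct p as [a b], q as [c d]; unfold adjb, adj; simpl.
  rewrite !andb_true_iff, negb_true_iff, andb_false_iff, !Z.eqb_neq, !Z.leb_le.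
  split.
  - intros [[Ne H1] H2]. split; [|lia]. intros E. injection E. lia.
  - intros [Ne H]. split; [split|]; try lia.
    destruct (Z.eq_dec a c); [right | left]; [intros E; apply Ne; f_equal|]; lia.
Qed.

Lemma adjb_vadd u p q : adjb (vadd u p) (vadd u q) = adjb p q.
Proof.
  unfold adjb, vadd; simpl.
  replace (fst u + fst q - (fst u + fst p)) with (fst q - fst p) by ring.
  replace (snd u + snd q - (snd u + snd p)) with (snd q - snd p) by ring.
  reflexivity.
Qed.

Lemma in_coord_range c k z : In z (coord_range c k) <-> Z.abs (z - c) <= Z.of_nat k.
Proof.
  unfold coord_range. rewrite in_map_iff. split.
  - intros [i [<- Hi]]. apply in_seq in Hi. lia.
  - intros Hz. exists (Z.to_nat (z - c + Z.of_nat k)). rewrite in_seq. lia.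
Qed.

Lemma in_ball u k x :
  In x (Defs.ball u k) <->
  Z.abs (fst x - fst u) <= Z.of_nat k /\ Z.abs (snd x - snd u) <= Z.of_nat k.
Proof. destruct x; unfold Defs.ball, V; simpl. now rewrite in_prod_iff, !in_coord_range. Qed.

Lemma residue_check (P : Z -> bool) :
  forallb P (map Z.of_nat (seq 0 9)) = true -> forall c, P (c mod 9) = true.
Proof.
  intros H c. rewrite forallb_forall in H. apply H, in_map_iff.
  pose proof (Z.mod_pos_bound c 9 ltac:(lia)).
  exists (Z.to_nat (c mod 9)). rewrite in_seq. lia.
Qed.

Definition lin (p : V) : Z := fst p - 2 * snd p.
Definition base_residue (c : Z) : bool := (c mod 9 =? 0) || (c mod 9 =? 3).
Definition base (p : V) : bool := base_residue (lin p).

Lemma lin_vadd u e : lin (vadd u e) = lin u + lin e.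
Proof. unfold lin, vadd; cbn [fst snd]; ring. Qed.

Lemma base_vadd u e : base (vadd u e) = base_residue (lin u mod 9 + lin e).
Proof. unfold base, base_residue. now rewrite Zplus_mod_idemp_l, lin_vadd. Qed.

Lemma base_dominating : dominating base.
Proof.
  intros u.
  pose proof (residue_check
                (fun r => existsb (fun e => base_residue (r + lin e)) (Defs.ball (0, 0) 1))
                ltac:(vm_compute; reflexivity) (lin u)) as H.
  apply existsb_exists in H as [e [He Be]]. apply in_ball in He. simpl in He.
  exists (vadd u e). rewrite base_vadd. split; [apply inN_closed_vadd|]; [lia..|exact Be].
Qed.

Lemma base_perfectly_matched : perfectly_matched base.
Proof.
  apply (perfectly_matched_by_translation base (fun p => lin p mod 9 =? 0) (1, -1));
    [discriminate | simpl; lia.. | |]; intros p; unfold base, base_residue; rewrite lin_vadd.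
  - change (lin (1, -1)) with 3. rewrite !orb_true_iff, !Z.eqb_eq, Z.eqb_neq. lia_divmod.
  - change (lin (vopp (1, -1))) with (-3). rewrite !orb_true_iff, !Z.eqb_eq, Z.eqb_neq.
    lia_divmod.
Qed.

(* Coordinates are relative to a vertex u with [lin u mod 9 = r] (see [base_vadd]). *)
Definition near_separated (r : Z) (d : V) : bool :=
  let S e := base_residue (r + lin e) in
  S (0, 0) || S d || ((fst d =? 0) && (snd d =? 0)) ||
  existsb (fun e => S e && xorb (adjb (0, 0) e) (adjb d e)) (Defs.ball (0, 0) 3).

Lemma base_locating : locating base.
Proof.
  intros u v Hu Hv Huv.
  destruct (Z_le_gt_dec (Z.abs (fst u - fst v)) 2) as [Nx|];
    [destruct (Z_le_gt_dec (Z.abs (snd u - snd v)) 2) as [Ny|]|];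
    [|apply dominating_separates_far; auto using base_dominating; lia..].
  pose (d := (fst v - fst u, snd v - snd u)).
  assert (Ev : v = vadd u d) by (destruct u, v; unfold vadd, d; simpl; f_equal; ring).
  assert (Hd : In d (Defs.ball (0, 0) 2)).
  { apply in_ball. unfold d. simpl. clear -Nx Ny. lia. }
  pose proof (residue_check (fun r => forallb (near_separated r) (Defs.ball (0, 0) 2))
                ltac:(vm_compute; reflexivity) (lin u)) as H.
  rewrite forallb_forall in H. specialize (H d Hd).
  unfold near_separated in H. rewrite !orb_true_iff in H.
  destruct H as [[[H|H]|H]|H].
  - rewrite <- base_vadd, vadd_0 in H. congruence.
  - rewrite <- base_vadd, <- Ev in H. congruence.
  - apply andb_true_iff in H as [H1 H2]. apply Z.eqb_eq in H1, H2.
    destruct Huv. destruct u, v; simpl in *; f_equal; lia.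
  - apply existsb_exists in H as [e [_ H]]. apply andb_true_iff in H as [Be X].
    rewrite <- base_vadd in Be.
    rewrite <- (adjb_vadd u (0, 0)), <- (adjb_vadd u d), vadd_0, <- Ev in X.
    exists (vadd u e). rewrite Be, <- !adjb_spec.
    destruct (adjb u (vadd u e)), (adjb v (vadd u e)); simpl in X; try discriminate; intuition.
Qed.

(** * Encoding a bit sequence *)

Definition extra (b : nat -> bool) (p : V) : bool :=
  (snd p =? 0) && (0 <=? fst p) && ((fst p mod 9 =? 1) || (fst p mod 9 =? 2))
  && b (Z.to_nat (fst p / 9)).

Lemma extra_perfectly_matched b : perfectly_matched (extra b).
Proof.
  apply (perfectly_matched_by_translation (extra b) (fun p => fst p mod 9 =? 1) (1, 0));
    [discriminate | simpl; lia.. | |]; intros [x y]; unfold extra, vadd, vopp; cbn [fst snd];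
    rewrite !andb_true_iff, !orb_true_iff, !Z.eqb_eq, Z.leb_le.
  - intros [[[-> Hx] H9] Hb] H1. rewrite Z.eqb_neq.
    replace ((x + 1) / 9) with (x / 9) by lia_divmod.
    rewrite Hb. split; [split; [split|]|]; lia_divmod.
  - rewrite Z.eqb_neq. intros [[[-> Hx] H9] Hb] H1.
    replace ((x + - (1)) / 9) with (x / 9) by lia_divmod.
    rewrite Hb. split; [split; [split|]|]; lia_divmod.
Qed.

Lemma extra_disjoint_base b p : base p = true -> extra b p = false.
Proof.
  destruct p as [x y]. unfold base, base_residue, lin, extra; cbn [fst snd].
  destruct (y =? 0) eqn:Ey; [apply Z.eqb_eq in Ey as ->|reflexivity].
  intros Hb. apply orb_true_iff in Hb. rewrite !Z.eqb_eq in Hb.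
  destruct (x mod 9 =? 1) eqn:E1; [apply Z.eqb_eq in E1; lia_divmod|].
  destruct (x mod 9 =? 2) eqn:E2; [apply Z.eqb_eq in E2; lia_divmod|].
  now rewrite andb_false_r.
Qed.

Definition lpds (b : nat -> bool) : vset := setU base (extra b).

Lemma lpds_is_LPDS b : is_LPDS (lpds b).
Proof.
  apply is_LPDS_setU.
  - exact (conj base_dominating (conj base_perfectly_matched base_locating)).
  - apply extra_perfectly_matched.
  - apply extra_disjoint_base.
Qed.

Lemma lpds_read b n : lpds b (9 * Z.of_nat n + 1, 0) = b n.
Proof.
  unfold lpds, setU, base, base_residue, lin, extra; cbn [fst snd].
  replace ((9 * Z.of_nat n + 1 - 2 * 0) mod 9) with 1 by lia_divmod.
  replace ((9 * Z.of_nat n + 1) mod 9) with 1 by lia_divmod.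
  replace (Z.to_nat ((9 * Z.of_nat n + 1) / 9)) with n by lia_divmod.
  replace (0 <=? 9 * Z.of_nat n + 1) with true by (symmetry; apply Z.leb_le; lia).
  reflexivity.
Qed.

(** * Density *)

Fixpoint zcount (h : Z -> bool) (a : Z) (n : nat) : nat :=
  match n with
  | O => O
  | S n => ((if h a then 1 else 0) + zcount h (a + 1) n)%nat
  end.

Lemma zcount_ext h g a n : (forall z, h z = g z) -> zcount h a n = zcount g a n.
Proof. intros E. revert a; induction n; intros a; simpl; [reflexivity|]. now rewrite E, IHn. Qed.

Lemma zcount_translate h a b n : zcount h (a + b) n = zcount (fun i => h (a + i)) b n.
Proof.
  revert b; induction n; intros b; simpl; [reflexivity|].
  now rewrite <- IHn, Z.add_assoc.
Qed.

Lemma zcount_add h a n m : zcount h a (n + m) = (zcount h a n + zcount h (a + Z.of_nat n) m)%nat.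
Proof.
  revert a; induction n; intros a; simpl; [now rewrite Z.add_0_r|].
  rewrite IHn. replace (a + 1 + Z.of_nat n) with (a + Z.pos (Pos.of_succ_nat n)) by lia. lia.
Qed.

Lemma zcount_le h a n : (zcount h a n <= n)%nat.
Proof.
  revert a; induction n; intros a; simpl; [lia|].
  specialize (IHn (a + 1)). destruct (h a); lia.
Qed.

Lemma zcount_mono h g a n :
  (forall z, h z = true -> g z = true) -> (zcount h a n <= zcount g a n)%nat.
Proof.
  intros E. revert a; induction n; intros a; simpl; [lia|]. specialize (IHn (a + 1)).
  destruct (h a) eqn:Ha; [rewrite (E _ Ha)|destruct (g a)]; lia.
Qed.

Lemma zcount_orb h g a n : (zcount (fun z => h z || g z) a n <= zcount h a n + zcount g a n)%nat.
Proof.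
  revert a; induction n; intros a; simpl; [lia|]. specialize (IHn (a + 1)).
  destruct (h a), (g a); simpl; lia.
Qed.

Lemma zcount_none h a n : (forall z, a <= z -> h z = false) -> zcount h a n = 0%nat.
Proof.
  revert a; induction n; intros a H; simpl; [reflexivity|].
  rewrite H, IHn; [reflexivity | intros z Hz; apply H; lia | lia].
Qed.

Lemma zcount_single h z0 a n : (forall z, h z = true -> z = z0) -> (zcount h a n <= 1)%nat.
Proof.
  intros H. revert a; induction n; intros a; simpl; [lia|].
  destruct (h a) eqn:Ha; [|apply IHn].
  apply H in Ha. rewrite zcount_none; [lia|].
  intros z Hz. destruct (h z) eqn:Hz'; [apply H in Hz'; lia | reflexivity].
Qed.

Lemma zcount_period_shift h p a n :
  (forall z, h (z + p) = h z) -> zcount h (a + p) n = zcount h a n.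
Proof.
  intros Hp. revert a; induction n; intros a; simpl; [reflexivity|].
  rewrite Hp, <- (IHn (a + 1)). now replace (a + p + 1) with (a + 1 + p) by ring.
Qed.

Lemma zcount_periodic h p a q :
  (forall z, h (z + Z.of_nat p) = h z) -> zcount h a (p * q) = (q * zcount h a p)%nat.
Proof.
  intros Hp. induction q; [now rewrite Nat.mul_0_r|].
  rewrite Nat.mul_succ_r, Nat.add_comm, zcount_add, zcount_period_shift, IHq by exact Hp.
  lia.
Qed.

Lemma length_filter_seq h a m n :
  length (filter h (map (fun i => a + Z.of_nat i) (seq m n))) = zcount h (a + Z.of_nat m) n.
Proof.
  revert m; induction n; intros m; [reflexivity|]. cbn [seq map filter zcount].
  replace (a + Z.of_nat m + 1) with (a + Z.of_nat (S m)) by lia.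
  rewrite <- IHn. now destruct (h (a + Z.of_nat m)).
Qed.

Lemma length_filter_coord_range h c k :
  length (filter h (coord_range c k)) = zcount h (c - Z.of_nat k) (2 * k + 1).
Proof. unfold coord_range. now rewrite length_filter_seq, Z.add_0_r. Qed.

Lemma zcount_base_period x a : zcount (fun y => base (x, y)) a 9 = 2%nat.
Proof.
  rewrite <- (Z.add_0_r a), zcount_translate.
  rewrite (zcount_ext _ (fun i => base_residue (lin (x, a) mod 9 + lin (0, i))))
    by (intros i; rewrite <- base_vadd; unfold vadd; simpl; now rewrite Z.add_0_r).
  apply Nat.eqb_eq.
  exact (residue_check (fun r => Nat.eqb (zcount (fun i => base_residue (r + lin (0, i))) 0 9) 2)
           ltac:(vm_compute; reflexivity) (lin (x, a))).
Qed.

Lemma zcount_base_bounds x a n :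
  (2 * (n / 9) <= zcount (fun y => base (x, y)) a n <= 2 * (n / 9) + 8)%nat.
Proof.
  rewrite (Nat.div_mod_eq n 9) at 2 3. rewrite zcount_add, zcount_periodic, zcount_base_period.
  - pose proof (zcount_le (fun y => base (x, y)) (a + Z.of_nat (9 * (n / 9))) (n mod 9)).
    pose proof (Nat.mod_upper_bound n 9 ltac:(lia)). lia.
  - intros z. unfold base, base_residue, lin; cbn [fst snd].
    change (Z.of_nat 9) with 9.
    replace (x - 2 * (z + 9)) with (x - 2 * z + (-2) * 9) by ring.
    now rewrite Z.mod_add.
Qed.

Lemma extra_row b p : extra b p = true -> snd p = 0.
Proof. unfold extra. now rewrite !andb_true_iff, Z.eqb_eq. Qed.

Lemma zcount_lpds_bounds b x a n :
  (2 * (n / 9) <= zcount (fun y => lpds b (x, y)) a n <= 2 * (n / 9) + 9)%nat.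
Proof.
  pose proof (zcount_base_bounds x a n) as Hbase.
  pose proof (zcount_orb (fun y => base (x, y)) (fun y => extra b (x, y)) a n).
  pose proof (zcount_single (fun y => extra b (x, y)) 0 a n (fun y Hy => extra_row b (x, y) Hy)).
  pose proof (zcount_mono (fun y => base (x, y)) (fun y => lpds b (x, y)) a n
                (fun y Hy => orb_true_intro _ _ (or_introl Hy))).
  unfold lpds, setU in *. lia.
Qed.

Lemma length_filter_list_prod (A : vset) (xs ys : list Z) lo hi :
  (forall x, (lo <= length (filter (fun y => A (x, y)) ys) <= hi)%nat) ->
  (length xs * lo <= length (filter A (list_prod xs ys)) <= length xs * hi)%nat.
Proof.
  intros H. induction xs as [|x xs IH]; simpl; [lia|].
  rewrite filter_app, length_app, filter_map_swap, length_map.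
  destruct (H x), IH. split; apply Nat.add_le_mono; assumption.
Qed.

Lemma length_coord_range c k : length (coord_range c k) = (2 * k + 1)%nat.
Proof. unfold coord_range. now rewrite length_map, length_seq. Qed.

Lemma length_ball u k : length (Defs.ball u k) = ((2 * k + 1) * (2 * k + 1))%nat.
Proof. unfold Defs.ball, V. now rewrite length_prod, !length_coord_range. Qed.

Lemma lpds_ball_count b u k :
  let n := (2 * k + 1)%nat in
  let C := length (filter (lpds b) (Defs.ball u k)) in
  (2 * n * n <= 9 * C + 16 * n /\ 9 * C <= 2 * n * n + 81 * n)%nat.
Proof.
  intros n C.
  assert (HC : (n * (2 * (n / 9)) <= C <= n * (2 * (n / 9) + 9))%nat).
  { unfold n, C, Defs.ball. rewrite <- (length_coord_range (fst u) k) at 1 3.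
    apply length_filter_list_prod. intros x.
    rewrite length_filter_coord_range. apply zcount_lpds_bounds. }
  pose proof (Nat.div_mod_eq n 9). pose proof (Nat.mod_upper_bound n 9 ltac:(lia)).
  nia.
Qed.

Close Scope Z_scope.
Open Scope R_scope.

Lemma ratio_lpds_error b u k : Rabs (ratio (lpds b) u k - 2 / 9) <= 9 / INR (S k).
Proof.
  unfold ratio. rewrite length_ball.
  destruct (lpds_ball_count b u k) as [Hlo Hhi].
  set (n := (2 * k + 1)%nat) in *. set (C := length (filter (lpds b) (Defs.ball u k))) in *.
  apply le_INR in Hlo, Hhi. rewrite !plus_INR, !mult_INR in Hlo, Hhi. rewrite mult_INR.
  assert (HK : 0 < INR (S k)) by (apply lt_0_INR; lia).
  assert (HKn : INR (S k) <= INR n) by (apply le_INR; unfold n; lia).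
  set (N := INR n) in *. set (K := INR (S k)) in *. set (c := INR C) in *. simpl in Hlo, Hhi.
  set (s := c / (N * N) - 2 / 9).
  assert (Hs : -16 <= 9 * s * N <= 81).
  { assert (E : 9 * s * N * N = 9 * c - 2 * N * N) by (unfold s; field; lra). nra. }
  assert (HsK : -9 <= s * K <= 9) by (destruct (Rle_or_lt 0 s); nra).
  apply Rabs_le. split; apply (Rmult_le_reg_r K); trivial.
  - replace (- (9 / K) * K) with (-9) by (field; lra). lra.
  - replace (9 / K * K) with 9 by (field; lra). lra.
Qed.

Lemma is_lim_seq_of_error (s : nat -> R) (c M : R) :
  (forall k, Rabs (s k - c) <= M / INR (S k)) -> is_lim_seq s c.
Proof.
  intros Hs.
  assert (Hinv : is_lim_seq (fun k => M / INR (S k)) 0).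
  { replace (Finite 0) with (Rbar_mult M 0) by (simpl; f_equal; ring).
    apply is_lim_seq_scal_l, (is_lim_seq_inv _ p_infty); [|discriminate].
    exact (proj1 (is_lim_seq_incr_1 INR p_infty) is_lim_seq_INR). }
  apply (is_lim_seq_le_le (fun k => c - M / INR (S k)) _ (fun k => c + M / INR (S k))).
  - intros k. specialize (Hs k). apply Rabs_le_between in Hs. lra.
  - replace (Finite c) with (Rbar_minus c 0) by (simpl; f_equal; ring).
    apply is_lim_seq_minus'; [apply is_lim_seq_const | exact Hinv].
  - replace (Finite c) with (Rbar_plus c 0) by (simpl; f_equal; ring).
    apply is_lim_seq_plus'; [apply is_lim_seq_const | exact Hinv].
Qed.

Lemma density_at_of_lim (A : vset) (u : V) (c : R) :
  is_lim_seq (ratio A u) c -> density_at A u = Finite c.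
Proof. intros H. apply is_LimSup_seq_unique, is_lim_LimSup_seq, H. Qed.

Lemma density_lpds b u : density_at (lpds b) u = Finite (2 / 9).
Proof. apply density_at_of_lim, (is_lim_seq_of_error _ _ 9), ratio_lpds_error. Qed.

Theorem theorem5 :
  ~ (exists g : nat -> vset,
       forall S : vset,
         is_LPDS S ->
         (forall u : V, density_at S u = Finite (2 / 9)%R) ->
         exists n : nat, g n = S).
Proof.
  intros [g Hg].
  destruct (cantor_diagonal lpds (fun S n => S (9 * Z.of_nat n + 1, 0)%Z) lpds_read g) as [b Hb].
  destruct (Hg (lpds b) (lpds_is_LPDS b) (density_lpds b)) as [n Hn].
  exact (Hb n Hn).
Qed.
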